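(* Let $n$ be a positive integer, $d\in\Delta(n)$, and write $d=(1,2,\dots,q,q^{(s_q)},(q-1)^{(s_{q-1})},\dots,1^{(s_1)})$ with $q\ge1$ and $s_1,\dots,s_q\ge0$ integers. Let $\overline{\alpha}=(\overline{\alpha}_1,\dots,\overline{\alpha}_q)$ with $\overline{\alpha}_i=q-i+1+\sum_{k=i}^q s_k$, and let $\underline{\alpha}=\overline{\alpha}^*$ be its conjugate partition. Then for every $\alpha\in[\,d\,]$ we have $\overline{\alpha}\succ\alpha\succ\underline{\alpha}$.
   Context: A partition of a positive integer $n$ is a finite non-increasing sequence $\alpha=(\alpha_1,\dots,\alpha_l)$ of positive integers with sum $n$; $\mathcal{P}(n)$ is the set of partitions of $n$, and $\alpha_i=0$ for $i>l$. The diagonal sequence is $\delta(\alpha)=(d_k)_{k\ge1}$, $d_k=|\{i:1\le i\le k,\ \alpha_i+i-1\ge k\}|$ (trailing zeros omitted). $\Delta(n)=\{\delta(\alpha):\alpha\in\mathcal{P}(n)\}$, $[\,d\,]=\{\alpha\in\mathcal{P}(n):\delta(\alpha)=d\}$. Every $d\in\Delta(n)$ has the stated form, where $j^{(s)}$ denotes $s$ consecutive entries equal to $j$. The conjugate $\alpha^*$ of $\alpha$ has parts $\alpha^*_j=|\{i:\alpha_i\ge j\}|$. For $\alpha=(\alpha_1,\dots,\alpha_s),\beta=(\beta_1,\dots,\beta_t)\in\mathcal{P}(n)$, $\alpha\succ\beta$ ($\alpha$ majorizes $\beta$) means $\sum_{i=1}^k\alpha_i\ge\sum_{i=1}^k\beta_i$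 for all $1\le k\le\min\{s,t\}$. *)

From mathcomp Require Import all_boot.
Set Implicit Arguments. Unset Strict Implicit. Unset Printing Implicit Defensive.

(* Entries are 0-indexed in the seq: alpha_i (1-indexed) = nth 0 alpha (i-1),
   and alpha_i = 0 for i > size alpha, matching the paper's convention. *)
Definition is_partition (n : nat) (a : seq nat) : bool :=
  [&& sorted geq a, all (fun x => 0 < x) a & sumn a == n].

Definition diag_entry (a : seq nat) (k : nat) : nat :=
  count (fun i => k <= nth 0 a i.-1 + i.-1) (iota 1 k).

Definition strip0 (s : seq nat) : seq nat :=
  rev (drop (find (fun x => x != 0) (rev s)) (rev s)).

(* delta(alpha) with trailing zeros omitted; d_k = 0 for k > |alpha|. *)
Definition diag (a : seq nat) : seq nat :=
  strip0 [seq diag_entry a k | k <- iota 1 (sumn a)].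

Definition in_Delta (n : nat) (d : seq nat) : Prop :=
  exists a, is_partition n a /\ diag a = d.

Definition dseq (q : nat) (s : nat -> nat) : seq nat :=
  iota 1 q ++ flatten [seq nseq (s j) j | j <- rev (iota 1 q)].

Definition alphabar (q : nat) (s : nat -> nat) : seq nat :=
  [seq q - i + 1 + \sum_(i <= k < q.+1) s k | i <- iota 1 q].

Definition conj_part (a : seq nat) : seq nat :=
  [seq count (fun x => j <= x) a | j <- iota 1 (foldr maxn 0 a)].

Definition majorizes (a b : seq nat) : Prop :=
  forall k, 1 <= k <= minn (size a) (size b) ->
    sumn (take k b) <= sumn (take k a).

From mathcomp Require Import all_boot zify.

(* Put cell (i, c) of the Young diagram of alpha (rows counted from 0) on the
   diagonal m = i + c.  Then d_(m+1) is the number of cells on diagonal m; the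
   first k rows meet that diagonal in at most min(k, d_(m+1)) cells and, since
   they contain all of rows 0..m except m+1-k of them, in at least
   d_(m+1) - (m+1-k) cells.  Summing the upper bound over m gives
   sum_(i<k) #{m : d_m > i}, which for d = dseq q s are the first k parts of
   alphabar.  Summing the lower bound over m gives
   sum_(j<q) #{m < j+k : d_m > j}, and since d increases through 1..q and is
   non-increasing afterwards this is at least sum_(j<q) min(k, alphabar_j),
   which dominates the first k parts of the conjugate of alphabar. *)

Lemma sum_indicator_range i j N :
  \sum_(0 <= m < N) ((i <= m) && (m < j) : nat) = minn j N - i.
Proof.
elim: N => [|N IH]; first by rewrite big_geq //; lia.
rewrite big_nat_recr //= IH.
by case: (leqP i N) => Hi; case: (ltnP N j) => Hj /=; lia.
Qed.

Lemma sum_indicator_le lo hi (P : pred nat) :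
  \sum_(lo <= i < hi) (P i : nat) <= hi - lo.
Proof.
rewrite -[X in _ <= X]muln1 -sum_nat_const_nat.
by apply: leq_sum => i _; apply: leq_b1.
Qed.

Lemma sumn_take_nth (a : seq nat) k :
  sumn (take k a) = \sum_(0 <= i < k) nth 0 a i.
Proof.
elim: a k => [|x a IH] k.
  by rewrite /= big1 // => i _; rewrite nth_nil.
case: k => [|k]; first by rewrite big_geq.
by rewrite big_nat_recl //= IH.
Qed.

Lemma sum_nth_pad (f : nat -> nat) (d : seq nat) N :
  f 0 = 0 -> size d <= N -> \sum_(0 <= m < N) f (nth 0 d m) = \sum_(x <- d) f x.
Proof.
move=> f0 dN; rewrite [RHS](big_nth 0) (big_cat_nat (leq0n _) dN) /=.
rewrite [X in _ + X]big1_seq ?addn0 // => m /andP[_].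
by rewrite mem_index_iota => /andP[dm _]; rewrite nth_default.
Qed.

Lemma count_sumE T (P : pred T) (s : seq T) : count P s = \sum_(x <- s) (P x : nat).
Proof. by rewrite -sum1_count big_mkcond. Qed.

Lemma count_take_sumE (P : pred nat) (d : seq nat) N r :
  P 0 = false -> size d <= N ->
  count P (take r d) = \sum_(0 <= m < N) (P (nth 0 d m) && (m < r) : nat).
Proof.
move=> P0 dN; rewrite count_sumE -(sum_nth_pad _ _ N) ?P0 //; last first.
  by rewrite size_take_min geq_min dN orbT.
apply: eq_bigr => m _; case: (ltnP m r) => mr; first by rewrite nth_take ?andbT.
by rewrite andbF nth_default ?P0 // size_take_min geq_min mr.
Qed.

Lemma sum_count_gt (b : seq nat) k :
  \sum_(0 <= i < k) count (fun x => i < x) b = \sum_(x <- b) minn k x.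
Proof.
under eq_bigr do rewrite count_sumE.
rewrite exchange_big /=; apply: eq_bigr => x _.
rewrite (eq_bigr (fun i => ((0 <= i) && (i < x) : nat))) // sum_indicator_range.
lia.
Qed.

Lemma nth_strip0 (s : seq nat) m : nth 0 (strip0 s) m = nth 0 s m.
Proof.
have [f def_s] : exists f, s = strip0 s ++ nseq f 0.
  rewrite /strip0; set r := rev s; set f := find _ r; exists f.
  have zeros : take f r = nseq f 0.
    apply: (@eq_from_nth _ 0) => [|i]; rewrite size_takel ?find_size ?size_nseq //.
    move=> i_lt_f; rewrite nth_take // nth_nseq i_lt_f.
    by apply/eqP/negbFE/(before_find 0 i_lt_f).
  by rewrite -rev_nseq -zeros -rev_cat cat_take_drop revK.
rewrite [in RHS]def_s nth_cat nth_nseq; case: ltnP => // m_ge.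
by rewrite nth_default //; case: ifP.
Qed.

Lemma size_diag a : size (diag a) <= sumn a.
Proof.
by rewrite /diag /strip0 size_rev size_drop size_rev size_map size_iota leq_subr.
Qed.

Lemma nth_add_le_sumn (a : seq nat) i :
  all (fun x => 0 < x) a -> 0 < nth 0 a i -> nth 0 a i + i <= sumn a.
Proof.
elim: a i => [|x a IH] i; first by rewrite nth_nil.
case: i => [|i] /= /andP[x_gt0 a_pos] ai_gt0; first lia.
by have := IH i a_pos ai_gt0; lia.
Qed.

(* Cell (i, m - i) lies in the diagram iff m < a_i + i. *)
Definition diag_cells (a : seq nat) (k m : nat) : nat :=
  \sum_(0 <= i < k) ((i <= m) && (m < nth 0 a i + i) : nat).

Lemma diag_entryE a m : diag_entry a m.+1 = diag_cells a m.+1 m.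
Proof.
rewrite /diag_entry /diag_cells -[1]/(1 + 0) iotaDl count_map count_sumE.
rewrite /index_iota subn0 big_seq_cond [RHS]big_seq_cond.
apply: eq_bigr => i /andP[]; rewrite mem_iota /= add0n ltnS => i_le_m _.
by rewrite i_le_m.
Qed.

Lemma diag_cells_bounds a k m :
  diag_cells a k m <= minn k (diag_cells a m.+1 m) /\
  diag_cells a m.+1 m - (m.+1 - k) <= diag_cells a k m.
Proof.
set P := fun i => (i <= m) && (m < nth 0 a i + i).
have cells_le_k : diag_cells a k m <= k by have := sum_indicator_le 0 k P; rewrite subn0.
case: (leqP k m.+1) => k_le.
  have cells_split :
      diag_cells a m.+1 m = diag_cells a k m + \sum_(k <= i < m.+1) (P i : nat).
    by rewrite /diag_cells (big_cat_nat (leq0n k) k_le).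
  by have := sum_indicator_le k m.+1 P; lia.
have cells_sat : diag_cells a k m = diag_cells a m.+1 m.
  rewrite /diag_cells (big_cat_nat (leq0n m.+1) (ltnW k_le)) /=.
  rewrite [X in _ + X]big1_seq ?addn0 // => i /andP[_].
  by rewrite mem_index_iota => /andP[m_lt_i _]; rewrite /P leqNgt m_lt_i.
by rewrite cells_sat in cells_le_k *; lia.
Qed.

Section PositiveParts.

Variable a : seq nat.
Hypothesis a_pos : all (fun x => 0 < x) a.

Lemma nth_diag m : nth 0 (diag a) m = diag_cells a m.+1 m.
Proof.
rewrite /diag nth_strip0.
case: (ltnP m (sumn a)) => m_lt.
  by rewrite (nth_map 0) ?size_iota // nth_iota // add1n diag_entryE.
rewrite nth_default ?size_map ?size_iota // /diag_cells big1 // => i _.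
have := @nth_add_le_sumn a i a_pos; case: posnP => [-> | _ /(_ isT)]; lia.
Qed.

Lemma sumn_take_diag_cells k :
  sumn (take k a) = \sum_(0 <= m < sumn a) diag_cells a k m.
Proof.
rewrite sumn_take_nth /diag_cells exchange_big_nat /=.
apply: eq_bigr => i _; rewrite sum_indicator_range.
have := @nth_add_le_sumn a i a_pos; case: posnP => [-> | _ /(_ isT)]; lia.
Qed.

Lemma sumn_take_le_diag k : sumn (take k a) <= \sum_(x <- diag a) minn k x.
Proof.
rewrite sumn_take_diag_cells -(sum_nth_pad _ _ _ _ (size_diag a)) ?minn0 //.
apply: leq_sum => m _; rewrite nth_diag.
by case: (diag_cells_bounds a k m).
Qed.

Lemma sum_count_take_diag_le q k :
  \sum_(0 <= j < q) count (fun x => j < x) (take (j + k) (diag a)) <= sumn (take k a).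
Proof.
rewrite sumn_take_diag_cells.
under eq_bigr => j _ do rewrite (count_take_sumE _ _ _ _ (ltn0 j) (size_diag a)).
rewrite exchange_big_nat /=; apply: leq_sum => m _.
have window j : (j < nth 0 (diag a) m) && (m < j + k) =
                (m.+1 - k <= j) && (j < nth 0 (diag a) m).
  by rewrite andbC; congr andb; apply/idP/idP; lia.
under eq_bigr do rewrite window.
rewrite sum_indicator_range nth_diag.
by case: (diag_cells_bounds a k m); lia.
Qed.

End PositiveParts.

Lemma nth_conj_part_le (b : seq nat) i :
  nth 0 (conj_part b) i <= count (fun x => i < x) b.
Proof.
rewrite /conj_part; case: (ltnP i (foldr maxn 0 b)) => i_lt.
  by rewrite (nth_map 0) ?size_iota // nth_iota // add1n.
by rewrite nth_default ?size_map ?size_iota.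
Qed.

Lemma sumn_take_conj_part_le (b : seq nat) k :
  sumn (take k (conj_part b)) <= \sum_(x <- b) minn k x.
Proof.
rewrite sumn_take_nth -sum_count_gt.
by apply: leq_sum => i _; apply: nth_conj_part_le.
Qed.

Lemma geq_trans : transitive geq.
Proof. by move=> y x z xy yz; apply: leq_trans yz xy. Qed.

Lemma count_gt_take_sorted j (t : seq nat) r :
  sorted geq t ->
  count (fun x => j < x) (take r t) = minn r (count (fun x => j < x) t).
Proof.
elim: t r => [|x t IH] r; first by rewrite /= minn0.
rewrite /= (path_sortedE geq_trans) => /andP[x_ge t_sorted].
case: r => [|r] /=; first by rewrite min0n.
case: (ltnP j x) => j_x; first by rewrite IH //; lia.
have t_small : count (fun y => j < y) t = 0.
  apply/eqP; rewrite -leqn0 leqNgt -has_count.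
  by apply/hasPn => y /(allP x_ge) y_le; rewrite -leqNgt (leq_trans y_le).
rewrite t_small minn0; apply/eqP; rewrite -leqn0 -t_small.
by rewrite -{2}(cat_take_drop r t) count_cat leq_addr.
Qed.

Definition dseq_tail (q : nat) (s : nat -> nat) : seq nat :=
  flatten [seq nseq (s j) j | j <- rev (iota 1 q)].

Lemma dseqE q s : dseq q s = iota 1 q ++ dseq_tail q s.
Proof. by []. Qed.

Lemma dseq_tailS q s : dseq_tail q.+1 s = nseq (s q.+1) q.+1 ++ dseq_tail q s.
Proof. by rewrite /dseq_tail -[q.+1]addn1 iotaD rev_cat /= addnC. Qed.

Lemma sorted_dseq_tail q s : sorted geq (dseq_tail q s).
Proof.
elim: q => [|q IH] //; rewrite dseq_tailS.
have tail_le : all (geq q.+1) (dseq_tail q s).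
  apply/allP => x /flatten_mapP[j]; rewrite mem_rev mem_iota => /andP[_ j_le].
  by move=> /nseqP[-> _]; apply: ltnW.
elim: (s q.+1) => [|m IHm] //=.
by rewrite (path_sortedE geq_trans) all_cat all_nseq /= leqnn orbT tail_le IHm.
Qed.

Lemma count_gt_dseq_tail q s j :
  count (fun x => j < x) (dseq_tail q s) = \sum_(j.+1 <= l < q.+1) s l.
Proof.
elim: q => [|q IH]; first by rewrite big_geq.
rewrite dseq_tailS count_cat count_nseq IH.
case: (ltnP j q.+1) => j_lt; first by rewrite (big_nat_recr _ _ _ j_lt) /= mul1n addnC.
by rewrite !big_geq //; lia.
Qed.

Lemma count_gt_iota j p : count (fun x => j < x) (iota 1 p) = p - j.
Proof.
elim: p => [|p IH] //.
rewrite -[p.+1]addn1 iotaD count_cat IH /= add1n.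
by case: (ltnP j p.+1) => /= ?; lia.
Qed.

Lemma count_gt_dseq q s j :
  count (fun x => j < x) (dseq q s) = nth 0 (alphabar q s) j.
Proof.
rewrite dseqE count_cat count_gt_iota count_gt_dseq_tail /alphabar.
case: (ltnP j q) => j_lt.
  by rewrite (nth_map 0) ?size_iota // nth_iota // add1n; lia.
by rewrite nth_default ?size_map ?size_iota // big_geq //; lia.
Qed.

Lemma count_gt_take_dseq q s j k : j < q ->
  minn k (nth 0 (alphabar q s) j) <= count (fun x => j < x) (take (j + k) (dseq q s)).
Proof.
move=> j_lt; rewrite -count_gt_dseq dseqE take_cat size_iota count_cat count_gt_iota.
case: ltnP => jk_q; first by rewrite take_iota count_gt_iota; lia.
by rewrite count_cat count_gt_iota count_gt_take_sorted ?sorted_dseq_tail; lia.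
Qed.

Theorem proposition3p1 (n q : nat) (s : nat -> nat) (a : seq nat) :
  0 < n -> 1 <= q ->
  in_Delta n (dseq q s) ->
  is_partition n a -> diag a = dseq q s ->
  majorizes (alphabar q s) a /\ majorizes a (conj_part (alphabar q s)).
Proof.
move=> _ _ _ /and3P[_ a_pos _] diag_a.
have size_alphabar : size (alphabar q s) = q by rewrite size_map size_iota.
split=> k _.
- apply: leq_trans (sumn_take_le_diag _ a_pos k) _.
  rewrite diag_a -sum_count_gt sumn_take_nth.
  by under eq_bigr do rewrite count_gt_dseq.
- apply: leq_trans (sumn_take_conj_part_le _ k) _.
  apply: leq_trans (sum_count_take_diag_le _ a_pos q k).
  rewrite (big_nth 0) size_alphabar diag_a big_nat_cond [X in _ <= X]big_nat_cond.
  by apply: leq_sum => j /andP[/andP[_ j_lt] _]; apply: count_gt_take_dseq.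
Qed.
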